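(* A binary PS-algebra $\langle A,f,g\rangle$ satisfies (wMIA): for all $x,y\in A$, if $x\neq0$ and $y\neq0$ then $g(x,y)\leq f(x,y)$, if and only if $S_g\subseteq Q_f$. In particular, for every betweenness frame $\mathfrak F=\langle U,B\rangle$, the full complex algebra $\langle 2^U,\langle B\rangle,[\![B]\!]\rangle$ satisfies $S_{[\![B]\!]}\subseteq Q_{\langle B\rangle}$.
   Context: A PS-algebra is $\langle A,f,g\rangle$ where $A$ is a Boolean algebra with at least two elements and $f,g\colon A^2\to A$ satisfy: $f(x,y)=0$ whenever $x=0$ or $y=0$; $f$ additive in each argument; $g(x,y)=1$ whenever $x=0$ or $y=0$; $g$ co-additive in each argument ($g(x+x',y)=g(x,y)\cdot g(x',y)$, $g(x,y+y')=g(x,y)\cdot g(x,y')$). On the set $\mathrm{Ult}(A)$ of ultrafilters define ternary relations $Q_f(\mathcal U_1,\mathcal U_2,\mathcal U_3)\iff f[\mathcal U_1\times\mathcal U_3]\subseteq\mathcal U_2$ and $S_g(\mathcal U_1,\mathcal U_2,\mathcal U_3)\iff g[\mathcal U_1\times\mathcal U_3]\cap\mathcal U_2\neq\emptyset$. A betweenness frame is $\langle U,B\rangle$, $U\neq\emptyset$, $B\subseteq U^3$, with, for all $a,b,c$: $B(a,a,a)$; $B(a,b,c)\Rightarrow B(c,b,a)$; $B(a,b,c)\Rightarrow B(a,a,b)$; $B(a,b,c)\wedge B(a,c,b)\Rightarrow b=c$. Its complex operators on $2^U$ are $\langle B\rangle(X,Y)=\{u\mid\exists x\in X\,\exists y\in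 Y\,B(x,u,y)\}$ and $[\![B]\!](X,Y)=\{u\mid\forall x\in X\,\forall y\in Y\,B(x,u,y)\}$. *)

(* Boolean algebras are complemented distributive lattices
   with top and bottom ([ctbDistrLatticeType]); [set U] (mathcomp-classical)
   carries the canonical powerset Boolean algebra instance. *)
From HB Require Import structures.
From mathcomp Require Import all_boot all_order.
From mathcomp Require Import boolp classical_sets.
Set Implicit Arguments. Unset Strict Implicit. Unset Printing Implicit Defensive.
Import Order.TTheory.

Section PS.
Context {disp : Order.disp_t} {A : ctbDistrLatticeType disp}.

Definition ultrafilter (F : set A) : Prop :=
  [/\ F Order.top,
      ~ F Order.bottom,
      (forall x y, F x -> (x <= y)%O -> F y),
      (forall x y, F x -> F y -> F (Order.meet x y))
    & (forall x, F x \/ F (Order.compl x))].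

Definition PS_algebra (f g : A -> A -> A) : Prop :=
  [/\ Order.bottom != Order.top :> A,
      (forall x y, x = Order.bottom \/ y = Order.bottom -> f x y = Order.bottom),
      (forall x x' y, f (Order.join x x') y = Order.join (f x y) (f x' y)),
      (forall x y y', f x (Order.join y y') = Order.join (f x y) (f x y'))
    & [/\ (forall x y, x = Order.bottom \/ y = Order.bottom -> g x y = Order.top),
      (forall x x' y, g (Order.join x x') y = Order.meet (g x y) (g x' y))
    & (forall x y y', g x (Order.join y y') = Order.meet (g x y) (g x y'))]].

Definition Q_rel (f : A -> A -> A) (U1 U2 U3 : set A) : Prop :=
  forall x y, U1 x -> U3 y -> U2 (f x y).

Definition S_rel (g : A -> A -> A) (U1 U2 U3 : set A) : Prop :=
  exists x y, [/\ U1 x, U3 y & U2 (g x y)].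

Definition S_sub_Q (f g : A -> A -> A) : Prop :=
  forall U1 U2 U3 : set A, ultrafilter U1 -> ultrafilter U2 -> ultrafilter U3 ->
    S_rel g U1 U2 U3 -> Q_rel f U1 U2 U3.

Definition wMIA (f g : A -> A -> A) : Prop :=
  forall x y, x != Order.bottom -> y != Order.bottom -> (g x y <= f x y)%O.

End PS.

Definition betweenness_frame (U : Type) (B : U -> U -> U -> Prop) : Prop :=
  [/\ inhabited U,
      (forall a, B a a a),
      (forall a b c, B a b c -> B c b a),
      (forall a b c, B a b c -> B a a b)
    & (forall a b c, B a b c -> B a c b -> b = c)].

Definition diamB (U : Type) (B : U -> U -> U -> Prop) (X Y : set U) : set U :=
  fun u => exists x y, [/\ X x, Y y & B x u y].

Definition boxB (U : Type) (B : U -> U -> U -> Prop) (X Y : set U) : set U :=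
  fun u => forall x y, X x -> Y y -> B x u y.

(** The implication from (wMIA) to [S_g <= Q_f] only uses that [f] is
    monotone and [g] antitone: if [g x0 y0] lies in [U2] and [x], [y] lie in
    [U1], [U3], then [x & x0] and [y & y0] are nonzero, so
    [g x0 y0 <= g (x & x0) (y & y0) <= f (x & x0) (y & y0) <= f x y].
    Conversely, if [g x y] is not below [f x y] for nonzero [x], [y], then
    ultrafilters through [x], [y] and [g x y & ~ f x y] witness [S_g] but not
    [Q_f]; their existence is the ultrafilter lemma, proved with Zorn.
    In a full complex algebra [<B>] is monotone, [[B]] antitone, and (wMIA)
    holds for every ternary relation [B]. *)

From HB Require Import structures.
From mathcomp Require Import all_boot all_order.
From mathcomp Require Import boolp classical_sets.
Set Implicit Arguments. Unset Strict Implicit. Unset Printing Implicit Defensive.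
Import Order.Theory.

Section BooleanAlgebra.
Context {disp : Order.disp_t} {A : ctbDistrLatticeType disp}.
Local Open Scope order_scope.

Definition proper_filter (F : set A) : Prop :=
  [/\ ~ F \bot, (forall x y, F x -> x <= y -> F y)
    & (forall x y, F x -> F y -> F (x `&` y))].

Lemma ultrafilter_neq0 (F : set A) x : ultrafilter F -> F x -> x != \bot.
Proof. by case=> _ nb _ _ _ Fx; apply/eqP => x0; apply: nb; rewrite -x0. Qed.

Lemma ultrafilter_up (F : set A) x y : ultrafilter F -> F x -> x <= y -> F y.
Proof. by case=> _ _ up _ _; exact: up. Qed.

Lemma ultrafilter_meet (F : set A) x y :
  ultrafilter F -> F x -> F y -> F (x `&` y).
Proof. by case=> _ _ _ mc _; exact: mc. Qed.

Lemma proper_filter_bigcup (C : set (set A)) :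
  (C `<=` proper_filter)%classic -> total_on C subset ->
  proper_filter (\bigcup_(X in C) X)%classic.
Proof.
move=> CF Ctot; split.
- by case=> X /CF[].
- move=> x y [X CX Xx] xy; exists X => //.
  by case: (CF X CX) => _ up _; exact: up Xx xy.
- move=> x y [X CX Xx] [Y CY Yy].
  have [XY|YX] := Ctot X Y CX CY.
  + by exists Y => //; case: (CF Y CY) => _ _ mc; exact: mc (XY _ Xx) Yy.
  + by exists X => //; case: (CF X CX) => _ _ mc; exact: mc Xx (YX _ Yy).
Qed.

Definition filter_adjoin (F : set A) (x : A) : set A :=
  fun u => exists2 w, F w & w `&` x <= u.

Lemma filter_adjoin_sub (F : set A) x : (F `<=` filter_adjoin F x)%classic.
Proof. by move=> w Fw; exists w => //; exact: leIl. Qed.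

Lemma filter_adjoin_mem (F : set A) x w : F w -> filter_adjoin F x x.
Proof. by move=> Fw; exists w => //; exact: leIr. Qed.

Lemma filter_adjoin_proper (F : set A) x :
  proper_filter F -> ~ filter_adjoin F x \bot ->
  proper_filter (filter_adjoin F x).
Proof.
case=> _ _ mc nbot; split => //.
- by move=> u y [w Fw wu] uy; exists w => //; exact: le_trans uy.
- move=> u y [w Fw wu] [v Fv vy]; exists (w `&` v); first exact: mc.
  by rewrite lexI (le_trans _ wu) ?(le_trans _ vy) // leI2 ?leIl ?leIr.
Qed.

Lemma maximal_proper_filter_ultrafilter (M : set A) a :
  proper_filter M -> M a ->
  (forall G, proper_filter G -> (M `<=` G)%classic -> (G `<=` M)%classic) ->
  ultrafilter M.
Proof.
move=> MF Ma maxM; have [Mb up mc] := MF.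
split => //; first by apply: up Ma _; exact: lex1.
move=> x; have [Mx|Mx] := pselect (M x); [by left | right].
have [w Mw wx] : filter_adjoin M x \bot.
  apply: contrapT => nbot; apply: Mx.
  apply: (maxM _ (filter_adjoin_proper MF nbot) (@filter_adjoin_sub M x)).
  exact: filter_adjoin_mem Ma.
by apply: up Mw _; rewrite -disj_leC -lex0.
Qed.

Lemma proper_filter_principal (a : A) :
  a != \bot -> proper_filter (fun y => a <= y).
Proof.
move=> a0; split.
- by rewrite lex0; exact/negP.
- by move=> x y ax xy; exact: le_trans xy.
- by move=> x y ax ay; rewrite lexI ax ay.
Qed.

(* Only nonempty members of the family must contain [a]: [Zorn_bigcup] needs
   the union of the empty chain to stay in the family. *)
Lemma ultrafilter_exists (a : A) : a != \bot -> exists2 F, ultrafilter F & F a.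
Proof.
move=> a0.
pose P X := proper_filter X /\ ((X !=set0)%classic -> X a).
have [M [[MF Ma] maxM]] : exists M, P M /\ forall G, (M `<` G)%classic -> ~ P G.
  apply: Zorn_bigcup => C CP Ctot; split.
    by apply: proper_filter_bigcup Ctot => X /CP[].
  by case=> x [X CX Xx]; exists X => //; apply: (CP X CX).2; exists x.
have upa := proper_filter_principal a0.
have {}Ma : M a.
  apply: Ma; apply/set0P/eqP => M0.
  apply: (maxM (fun y => a <= y)); last by split => // _; exact: lexx.
  by rewrite M0; split => // /(_ a (lexx a)).
exists M => //; apply: (maximal_proper_filter_ultrafilter MF Ma) => G GF MG.
apply: contrapT => GM; apply: (maxM G) => //.
by split => // _; exact: MG.
Qed.

Definition monotone2 (h : A -> A -> A) : Prop :=
  forall x x' y y', x <= x' -> y <= y' -> h x y <= h x' y'.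

Definition antitone2 (h : A -> A -> A) : Prop :=
  forall x x' y y', x <= x' -> y <= y' -> h x' y' <= h x y.

Lemma monotone2_of_additive (h : A -> A -> A) :
  (forall x x' y, h (x `|` x') y = h x y `|` h x' y) ->
  (forall x y y', h x (y `|` y') = h x y `|` h x y') -> monotone2 h.
Proof.
move=> hl hr x x' y y' /join_idPr xx /join_idPr yy.
apply: (@le_trans _ _ (h x' y)); first by rewrite -xx hl leUl.
by rewrite -yy hr leUl.
Qed.

Lemma antitone2_of_coadditive (h : A -> A -> A) :
  (forall x x' y, h (x `|` x') y = h x y `&` h x' y) ->
  (forall x y y', h x (y `|` y') = h x y `&` h x y') -> antitone2 h.
Proof.
move=> hl hr x x' y y' /join_idPr xx /join_idPr yy.
apply: (@le_trans _ _ (h x y')); first by rewrite -xx hl leIl.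
by rewrite -yy hr leIl.
Qed.

Lemma S_sub_Q_of_wMIA (f g : A -> A -> A) :
  monotone2 f -> antitone2 g -> wMIA f g -> S_sub_Q f g.
Proof.
move=> fmono ganti W U1 U2 U3 u1 u2 u3 [x0 [y0 [U1x0 U3y0 U2g]]] x y U1x U3y.
have x_neq0 := ultrafilter_neq0 u1 (ultrafilter_meet u1 U1x U1x0).
have y_neq0 := ultrafilter_neq0 u3 (ultrafilter_meet u3 U3y U3y0).
apply: (ultrafilter_up u2 U2g).
apply: (le_trans (ganti _ _ _ _ (leIr x0 x) (leIr y0 y))).
apply: (le_trans (W _ _ x_neq0 y_neq0)).
by apply: fmono; exact: leIl.
Qed.

Lemma wMIA_of_S_sub_Q (f g : A -> A -> A) : S_sub_Q f g -> wMIA f g.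
Proof.
move=> SQ x y x0 y0; apply/contraT => ngf.
have c0 : g x y `&` ~` f x y != \bot by rewrite disj_leC complK.
have [U1 u1 U1x] := ultrafilter_exists x0.
have [U3 u3 U3y] := ultrafilter_exists y0.
have [U2 u2 U2c] := ultrafilter_exists c0.
have U2g : U2 (g x y) by apply: ultrafilter_up u2 U2c _; exact: leIl.
have U2f : U2 (f x y).
  by apply: (SQ _ _ _ u1 u2 u3 _ _ _ U1x U3y); exists x, y.
have := ultrafilter_neq0 u2 (ultrafilter_meet u2 U2c U2f).
by rewrite -meetA meetCx meetx0 eqxx.
Qed.

Lemma PS_algebra_wMIA_S_sub_Q (f g : A -> A -> A) :
  PS_algebra f g -> (wMIA f g <-> S_sub_Q f g).
Proof.
case=> _ _ fl fr [_ gl gr]; split; last exact: wMIA_of_S_sub_Q.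
apply: S_sub_Q_of_wMIA.
- exact: monotone2_of_additive.
- exact: antitone2_of_coadditive.
Qed.

End BooleanAlgebra.

Section ComplexAlgebra.
Variables (U : Type) (B : U -> U -> U -> Prop).

Lemma diamB_monotone2 : monotone2 (diamB B).
Proof.
move=> X X' Y Y'; rewrite !subsetEset => XX YY u [x [y [Xx Yy Bxuy]]].
by exists x, y; split; [exact: XX | exact: YY |].
Qed.

Lemma boxB_antitone2 : antitone2 (boxB B).
Proof.
move=> X X' Y Y'; rewrite !subsetEset => XX YY u Bu x y Xx Yy.
exact: Bu (XX _ Xx) (YY _ Yy).
Qed.

Lemma complex_algebra_wMIA : wMIA (diamB B) (boxB B).
Proof.
move=> X Y /set0P[x Xx] /set0P[y Yy]; rewrite subsetEset => u Bu.
by exists x, y; split => //; exact: Bu.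
Qed.

End ComplexAlgebra.

Theorem lemma40 :
  (forall (disp : Order.disp_t) (A : ctbDistrLatticeType disp) (f g : A -> A -> A),
      PS_algebra f g -> (wMIA f g <-> S_sub_Q f g)) /\
  (forall (U : Type) (B : U -> U -> U -> Prop),
      betweenness_frame B -> @S_sub_Q _ (set U) (diamB B) (boxB B)).
Proof.
split=> [disp A f g | U B _]; first exact: PS_algebra_wMIA_S_sub_Q.
apply: S_sub_Q_of_wMIA.
- exact: diamB_monotone2.
- exact: boxB_antitone2.
- exact: complex_algebra_wMIA.
Qed.
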